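(* Let $\mathbf{PsTop}$ be the category of pseudotopological spaces, with cylinder $IX = X \times [0,1]$, $i_k(x) = (x,k)$ ($k=0,1$), $p : X\times[0,1]\to X$ the projection, initial object $\varnothing$ (the empty space), and $\mathrm{cof}$ the class of morphisms $i : B \to A$ having the homotopy extension property (defined below). Then $(\mathbf{PsTop}, I, \mathrm{cof}, \varnothing)$ is an $I$-category.
   Context: Pseudotopological spaces: a convergence space is a set $X$ with a relation between filters on $X$ and points (written $\lambda \to x$) such that $\lambda \to x$, $\lambda\subseteq\lambda'$ imply $\lambda'\to x$, and the principal ultrafilter $\dot x \to x$; it is pseudotopological iff $\lambda \to x$ holds exactly when every ultrafilter containing $\lambda$ converges to $x$. Continuous maps: $\lambda\to x$ implies $f(\lambda)\to f(x)$, where $f(\lambda)$ is the filter generated by images. $[0,1]$ has its topological convergence ($\lambda \to x$ iff $\lambda$ contains the neighbourhood filter of $x$); products and pushouts are the initial/final structures in $\mathbf{PsTop}$. Homotopy extension property of $i : B \to A$: for $k = 0$ and $k=1$, for every object $Y$ and morphisms $f : A \to Y$, $G : IB \to Y$ with $f \circ i = G \circ i_k$, there exists $H : IA \to Y$ with $H \circ i_k = f$ and $H \circ Ii = G$. An $I$-category is a tuple $(\mathcal{C}, \mathrm{cof}, (I,i_0,i_1,p), \varnothing)$ with $(I,i_0,i_1,p)$ a cylinder (functor $I$, natural transformations $i_0,i_1 : \mathrm{Id} \to I$, $p : I \to \mathrm{Id}$, $p i_k = \mathrm{id}$), $\varnothing$ an initial object, satisfying: (1) Cylinder axiom: $I\varnothing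 = \varnothing$. (2) Pushout axiom: for a cofibration $i : B \to A$ and any $f : B \to X$ the pushout $A \cup_B X$ exists, the induced map $\bar i : X \to A\cup_B X$ is a cofibration, and $I$ carries this pushout to a pushout, $I(A\cup_B X) = IA \cup_{IB} IX$. (3) Cofibration axiom: isomorphisms are cofibrations; $\varnothing \to X$ is a cofibration for every $X$; composites of cofibrations are cofibrations; every cofibration has the homotopy extension property. (4) Interchange axiom: for every $X$ there is $T : IIX \to IIX$ with $T i_k = I i_k$ and $T I(i_k) = i_k$ for $k=0,1$. (5) Relative cylinder axiom: for a cofibration $i : B \to A$, the map $j = (i_0, Ii, i_1) : A \cup_B IB \cup_B A \to IA$ induced from the pushout of $A \xleftarrow{i} B \xrightarrow{i_0} IB \xleftarrow{i_1} B \xrightarrow{i} A$ is a cofibration. *)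

(* Pseudotopological spaces, formalized unbundled:
   a "space" is a carrier with a convergence relation; objects of PsTop are
   spaces satisfying [is_pstop]; morphisms are functions satisfying [cont].
   Equalities of morphisms are stated pointwise. *)
From Stdlib Require Import Reals.
Open Scope R_scope.

Definition is_filter {X : Type} (F : (X -> Prop) -> Prop) : Prop :=
  F (fun _ => True) /\
  ~ F (fun _ => False) /\
  (forall A B : X -> Prop, F A -> (forall x, A x -> B x) -> F B) /\
  (forall A B : X -> Prop, F A -> F B -> F (fun x => A x /\ B x)).

Definition fsub {X : Type} (F G : (X -> Prop) -> Prop) : Prop :=
  forall A, F A -> G A.

Definition is_ultrafilter {X : Type} (U : (X -> Prop) -> Prop) : Prop :=
  is_filter U /\ forall G, is_filter G -> fsub U G -> fsub G U.

Definition principal {X : Type} (x : X) : (X -> Prop) -> Prop :=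
  fun A => A x.

Definition fimg {X Y : Type} (f : X -> Y) (F : (X -> Prop) -> Prop)
  : (Y -> Prop) -> Prop :=
  fun B => exists A, F A /\ forall x, A x -> B (f x).

Record space := Space {
  pt : Type;
  cv : ((pt -> Prop) -> Prop) -> pt -> Prop
}.

Definition is_pstop (X : space) : Prop :=
  (forall F x, cv X F x -> is_filter F) /\
  (forall F G x, cv X F x -> is_filter G -> fsub F G -> cv X G x) /\
  (forall x, cv X (principal x) x) /\
  (forall F x, is_filter F ->
     (cv X F x <-> forall U, is_ultrafilter U -> fsub F U -> cv X U x)).

Definition cont (X Y : space) (f : pt X -> pt Y) : Prop :=
  forall F x, cv X F x -> cv Y (fimg f F) (f x).

Definition is_iso (X Y : space) (f : pt X -> pt Y) : Prop :=
  cont X Y f /\ exists g : pt Y -> pt X, cont Y X g /\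
    (forall x, g (f x) = x) /\ (forall y, f (g y) = y).

Definition prod_space (X Y : space) : space :=
  Space (pt X * pt Y)%type
    (fun F p => is_filter F /\ cv X (fimg fst F) (fst p) /\ cv Y (fimg snd F) (snd p)).

Definition I01 : Type := { r : R | 0 <= r <= 1 }.

Definition nbhd01 (t : I01) (U : I01 -> Prop) : Prop :=
  exists eps, 0 < eps /\
    forall s : I01, Rabs (proj1_sig s - proj1_sig t) < eps -> U s.

Definition interval_space : space :=
  Space I01 (fun F t => is_filter F /\ forall U, nbhd01 t U -> F U).

Definition zero01 : I01 := exist _ 0 (conj (Rle_refl 0) Rle_0_1).
Definition one01 : I01 := exist _ 1 (conj Rle_0_1 (Rle_refl 1)).

Definition empty_space : space := Space Empty_set (fun _ _ => False).
Definition empty_map (X : space) : pt empty_space -> pt X :=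
  fun e => match e with end.

(** the cylinder I X = X x [0,1], i_k, p and I on morphisms.
    k = false stands for 0, k = true for 1. *)
Definition cyl (X : space) : space := prod_space X interval_space.
Definition ik (k : bool) {X : space} : pt X -> pt (cyl X) :=
  fun x => (x, if k then one01 else zero01).
Definition cylp {X : space} : pt (cyl X) -> pt X := fst.
Definition cyl_map {X Y : space} (f : pt X -> pt Y) : pt (cyl X) -> pt (cyl Y) :=
  fun q => (f (fst q), snd q).

Definition is_initial (Z : space) : Prop :=
  forall Y : space, is_pstop Y ->
    (exists f : pt Z -> pt Y, cont Z Y f) /\
    (forall f g : pt Z -> pt Y, cont Z Y f -> cont Z Y g -> forall z, f z = g z).

Definition HEP (B A : space) (i : pt B -> pt A) : Prop :=
  forall (k : bool) (Y : space), is_pstop Y ->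
  forall (f : pt A -> pt Y) (G : pt (cyl B) -> pt Y),
    cont A Y f -> cont (cyl B) Y G ->
    (forall b, f (i b) = G (ik k b)) ->
    exists H : pt (cyl A) -> pt Y, cont (cyl A) Y H /\
      (forall a, H (ik k a) = f a) /\
      (forall q, H (cyl_map i q) = G q).

Definition cof (B A : space) (i : pt B -> pt A) : Prop :=
  cont B A i /\ HEP B A i.

Definition is_pushout (B A X P : space) (i : pt B -> pt A) (f : pt B -> pt X)
    (u : pt A -> pt P) (v : pt X -> pt P) : Prop :=
  is_pstop P /\ cont A P u /\ cont X P v /\ (forall b, u (i b) = v (f b)) /\
  forall Y : space, is_pstop Y ->
  forall (g : pt A -> pt Y) (h : pt X -> pt Y), cont A Y g -> cont X Y h ->
    (forall b, g (i b) = h (f b)) ->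
    exists k : pt P -> pt Y, cont P Y k /\
      (forall a, k (u a) = g a) /\ (forall x, k (v x) = h x) /\
      (forall k' : pt P -> pt Y, cont P Y k' ->
         (forall a, k' (u a) = g a) -> (forall x, k' (v x) = h x) ->
         forall p, k' p = k p).

(** colimit P of A <-i- B -i0-> IB <-i1- B -i-> A, written A ∪_B IB ∪_B A *)
Definition is_dpushout (B A P : space) (i : pt B -> pt A)
    (a0 : pt A -> pt P) (c : pt (cyl B) -> pt P) (a1 : pt A -> pt P) : Prop :=
  is_pstop P /\ cont A P a0 /\ cont (cyl B) P c /\ cont A P a1 /\
  (forall b, a0 (i b) = c (ik false b)) /\ (forall b, a1 (i b) = c (ik true b)) /\
  forall Y : space, is_pstop Y ->
  forall (g0 : pt A -> pt Y) (h : pt (cyl B) -> pt Y) (g1 : pt A -> pt Y),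
    cont A Y g0 -> cont (cyl B) Y h -> cont A Y g1 ->
    (forall b, g0 (i b) = h (ik false b)) -> (forall b, g1 (i b) = h (ik true b)) ->
    exists k : pt P -> pt Y, cont P Y k /\
      (forall a, k (a0 a) = g0 a) /\ (forall q, k (c q) = h q) /\
      (forall a, k (a1 a) = g1 a) /\
      (forall k' : pt P -> pt Y, cont P Y k' ->
         (forall a, k' (a0 a) = g0 a) -> (forall q, k' (c q) = h q) ->
         (forall a, k' (a1 a) = g1 a) -> forall p, k' p = k p).

(* The colimits of PsTop are quotients of sums carrying the final convergence, made
   pseudotopological by testing ultrafilters. Ultrafilters on a product lift along such
   a quotient map, so the product of a quotient with [0,1] is again a quotient; this
   gives I(A ∪_B X) = IA ∪_IB IX, and the cofibration part of the pushout axiom follows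
   from its universal property. If i has the HEP then so does Ii, by means of the
   retraction of IA onto the mapping cylinder A ∪_B IB. For the relative cylinder axiom,
   a piecewise-linear homeomorphism of the square taking the three faces t = 0, w = k,
   t = 1 onto the bottom face reduces the HEP of j : A ∪_B IB ∪_B A -> IA to that of Ii. *)

From Stdlib Require Import Reals Lra Classical ProofIrrelevance
  FunctionalExtensionality PropExtensionality IndefiniteDescription Relations.
From mathcomp Require filter.
Open Scope R_scope.

Section Filters.
Context {X : Type}.
Implicit Types (F G U : (X -> Prop) -> Prop) (A B : X -> Prop).

Lemma filterT F : is_filter F -> F (fun _ => True).
Proof. now intros (? & ? & ? & ?). Qed.

Lemma filter_proper F : is_filter F -> ~ F (fun _ => False).
Proof. now intros (? & ? & ? & ?). Qed.

Lemma filterS F : is_filter F -> forall A B, F A -> (forall x, A x -> B x) -> F B.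
Proof. now intros (? & ? & ? & ?). Qed.

Lemma filterI F : is_filter F -> forall A B, F A -> F B -> F (fun x => A x /\ B x).
Proof. now intros (? & ? & ? & ?). Qed.

Lemma filter_ex F : is_filter F -> forall A, F A -> exists x, A x.
Proof.
  intros HF A HA. apply NNPP. intros Hno. apply (filter_proper F HF).
  apply (filterS F HF A); auto. intros x Ax. apply Hno. now exists x.
Qed.

Lemma ultra_filter U : is_ultrafilter U -> is_filter U.
Proof. now intros []. Qed.

Lemma fsub_refl F : fsub F F.
Proof. now intros A. Qed.

Lemma fsub_trans F G U : fsub F G -> fsub G U -> fsub F U.
Proof. intros H1 H2 A HA. auto. Qed.

Lemma principal_filter (x : X) : is_filter (principal x).
Proof. unfold principal. repeat split; auto. Qed.

Lemma proper_filter_of_filter F : is_filter F -> filter.ProperFilter F.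
Proof.
  intros (HT & HN & HS & HI). constructor; [exact HN|]. constructor; [exact HT| |].
  - intros A B. apply HI.
  - intros A B AB FA. exact (HS A B FA AB).
Qed.

Lemma filter_of_proper_filter F : filter.ProperFilter F -> is_filter F.
Proof.
  intros [HN [HT HI HS]]. repeat split.
  - exact HT.
  - exact HN.
  - intros A B FA AB. exact (HS A B AB FA).
  - intros A B. apply HI.
Qed.

Lemma ultra_extend F : is_filter F -> exists U, is_ultrafilter U /\ fsub F U.
Proof.
  intros HF. destruct (filter.ultraFilterLemma (proper_filter_of_filter F HF))
    as [U [[PU maxU] FU]].
  exists U. split; [|exact FU]. split; [now apply filter_of_proper_filter|].
  intros G HG UG. rewrite (maxU G (proper_filter_of_filter G HG) UG). apply fsub_refl.
Qed.

(* Extend the filter generated by F and the complement of A; it is proper as A is not in F. *)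
Lemma ultra_extend_avoid F A : is_filter F -> ~ F A ->
  exists U, is_ultrafilter U /\ fsub F U /\ U (fun x => ~ A x).
Proof.
  intros HF nFA.
  set (G := fun B => exists C, F C /\ forall x, C x -> ~ A x -> B x).
  assert (HG : is_filter G).
  { repeat split.
    - exists (fun _ => True). split; auto. now apply filterT.
    - intros [C [FC HC]]. apply nFA. apply (filterS F HF C); auto.
      intros x Cx. apply NNPP. exact (HC x Cx).
    - intros B1 B2 [C [FC HC]] B12. exists C. split; auto.
    - intros B1 B2 [C1 [FC1 HC1]] [C2 [FC2 HC2]].
      exists (fun x => C1 x /\ C2 x). split; [now apply filterI|].
      intros x [] nA. split; auto. }
  destruct (ultra_extend G HG) as [U [UU GU]]. exists U. split; [exact UU|]. split.
  - intros B FB. apply GU. exists B. split; auto.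
  - apply GU. exists (fun _ => True). split; auto. now apply filterT.
Qed.

Lemma ultra_or_compl U : is_ultrafilter U -> forall A, U A \/ U (fun x => ~ A x).
Proof.
  intros UU A. destruct (classic (U A)) as [HA|nA]; [now left|right].
  destruct (ultra_extend_avoid U A (ultra_filter U UU) nA) as [V [UV [UsV VnA]]].
  exact (proj2 UU V (ultra_filter V UV) UsV _ VnA).
Qed.

End Filters.

Section Images.
Context {X Y Z : Type}.

Lemma fimg_filter (f : X -> Y) F : is_filter F -> is_filter (fimg f F).
Proof.
  intros HF. repeat split.
  - exists (fun _ => True). split; auto. now apply filterT.
  - intros [A [FA HA]]. apply (filter_proper F HF). now apply (filterS F HF A).
  - intros A B [C [FC HC]] AB. exists C. split; auto.
  - intros A B [C [FC HC]] [D [FD HD]]. exists (fun x => C x /\ D x).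
    split; [now apply filterI|]. intros x []. split; auto.
Qed.

Lemma fimg_fsub (f : X -> Y) F G : fsub F G -> fsub (fimg f F) (fimg f G).
Proof. intros FG B [A [FA HA]]. exists A. split; auto. Qed.

Lemma fsub_fimg_comp (f : X -> Y) (g : Y -> Z) F :
  fsub (fimg g (fimg f F)) (fimg (fun x => g (f x)) F).
Proof. intros C [B [[A [FA HA]] HB]]. exists A. split; auto. Qed.

Lemma fsub_comp_fimg (f : X -> Y) (g : Y -> Z) F :
  fsub (fimg (fun x => g (f x)) F) (fimg g (fimg f F)).
Proof.
  intros C [A [FA HA]]. exists (fun y => C (g y)). split; auto. exists A. split; auto.
Qed.

Lemma fsub_fimg_agree (f g : X -> Y) F S : is_filter F -> F S ->
  (forall x, S x -> f x = g x) -> fsub (fimg f F) (fimg g F).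
Proof.
  intros HF FS fg B [A [FA HA]]. exists (fun x => A x /\ S x).
  split; [now apply filterI|]. intros x [Ax Sx]. rewrite <- fg; auto.
Qed.

Lemma fsub_fimg_ext (f g : X -> Y) F : (forall x, f x = g x) -> fsub (fimg f F) (fimg g F).
Proof. intros fg B [A [FA HA]]. exists A. split; auto. intros x Ax. rewrite <- fg. auto. Qed.

Lemma fsub_principal_fimg (f : X -> Y) x : fsub (principal (f x)) (fimg f (principal x)).
Proof. intros B Bfx. exists (fun x => B (f x)). split; auto. Qed.

Lemma fimg_ultra (f : X -> Y) U : is_ultrafilter U -> is_ultrafilter (fimg f U).
Proof.
  intros UU. split; [apply fimg_filter, ultra_filter, UU|].
  intros G HG UG B GB.
  destruct (ultra_or_compl U UU (fun x => B (f x))) as [HB|HnB].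
  - exists (fun x => B (f x)). split; auto.
  - exfalso. apply (filter_proper G HG).
    apply (filterS G HG (fun y => B y /\ ~ B y)); [|tauto]. apply (filterI G HG); auto.
    apply UG. exists (fun x => ~ B (f x)). split; auto.
Qed.

Lemma ultra_lift (f : X -> Y) F W : is_filter F -> is_ultrafilter W -> fsub (fimg f F) W ->
  exists U, is_ultrafilter U /\ fsub F U /\ fsub (fimg f U) W.
Proof.
  intros HF UW FW. pose proof (ultra_filter W UW) as HW.
  set (G := fun C => exists A B, F A /\ W B /\ forall x, A x -> B (f x) -> C x).
  assert (HG : is_filter G).
  { repeat split.
    - exists (fun _ => True), (fun _ => True). repeat split; auto; now apply filterT.
    - intros [A [B [FA [WB HAB]]]].
      assert (Hne : W (fun y => (exists x, A x /\ f x = y) /\ B y)).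
      { apply (filterI W HW); auto. apply FW. exists A. split; eauto. }
      destruct (filter_ex W HW _ Hne) as [y [[x [Ax <-]] By]]. exact (HAB x Ax By).
    - intros C D [A [B [FA [WB HAB]]]] CD. exists A, B. auto.
    - intros C D [A [B [FA [WB HAB]]]] [A' [B' [FA' [WB' HAB']]]].
      exists (fun x => A x /\ A' x), (fun y => B y /\ B' y).
      split; [now apply filterI|]. split; [now apply filterI|].
      intros x [] []. split; auto. }
  destruct (ultra_extend G HG) as [U [UU GU]]. exists U. split; [exact UU|]. split.
  - intros A FA. apply GU. exists A, (fun _ => True). repeat split; auto. now apply filterT.
  - intros S [C [UC HC]]. destruct (ultra_or_compl W UW S) as [WS|WnS]; [exact WS|].
    exfalso. apply (filter_proper U (ultra_filter U UU)).
    apply (filterS U (ultra_filter U UU) (fun x => C x /\ ~ S (f x))).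
    + apply (filterI U (ultra_filter U UU)); auto. apply GU.
      exists (fun _ => True), (fun y => ~ S y). repeat split; auto. now apply filterT.
    + intros x [Cx nS]. exact (nS (HC x Cx)).
Qed.

End Images.

Section Convergence.
Context {X : space}.
Hypothesis PX : is_pstop X.

Lemma cv_filter F x : cv X F x -> is_filter F.
Proof. destruct PX as (H & _). exact (H F x). Qed.

Lemma cv_fsub F G x : cv X F x -> is_filter G -> fsub F G -> cv X G x.
Proof. destruct PX as (_ & H & _). exact (H F G x). Qed.

Lemma cv_principal x : cv X (principal x) x.
Proof. destruct PX as (_ & _ & H & _). exact (H x). Qed.

Lemma cv_ultra F x : is_filter F ->
  (cv X F x <-> forall U, is_ultrafilter U -> fsub F U -> cv X U x).
Proof. destruct PX as (_ & _ & _ & H). exact (H F x). Qed.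

Lemma cv_fimg_of_ultra {Z : Type} (p : Z -> pt X) F x : is_filter F ->
  (forall U, is_ultrafilter U -> fsub F U -> cv X (fimg p U) x) -> cv X (fimg p F) x.
Proof.
  intros HF HU. apply cv_ultra; [now apply fimg_filter|]. intros W UW FW.
  destruct (ultra_lift p F W HF UW FW) as [U [UU [FU UW']]].
  apply (cv_fsub (fimg p U)); auto. now apply ultra_filter.
Qed.

End Convergence.

Lemma cont_of_ultra (X Y : space) (f : pt X -> pt Y) : is_pstop X -> is_pstop Y ->
  (forall U x, is_ultrafilter U -> cv X U x -> cv Y (fimg f U) (f x)) -> cont X Y f.
Proof.
  intros PX PY Hf F x Fx. apply (cv_fimg_of_ultra PY); [exact (cv_filter PX F x Fx)|].
  intros U UU FU. apply Hf; [exact UU|].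
  apply (cv_fsub PX F); auto. now apply ultra_filter.
Qed.

Lemma cont_comp (X Y Z : space) (f : pt X -> pt Y) (g : pt Y -> pt Z) :
  is_pstop X -> is_pstop Z -> cont X Y f -> cont Y Z g -> cont X Z (fun x => g (f x)).
Proof.
  intros PX PZ cf cg F x Fx. apply (cv_fsub PZ (fimg g (fimg f F))).
  - now apply cg, cf.
  - apply fimg_filter. exact (cv_filter PX F x Fx).
  - apply fsub_fimg_comp.
Qed.

Lemma cont_ext (X Y : space) (f g : pt X -> pt Y) : is_pstop X -> is_pstop Y ->
  (forall x, f x = g x) -> cont X Y f -> cont X Y g.
Proof.
  intros PX PY fg cf F x Fx. rewrite <- fg. apply (cv_fsub PY (fimg f F)); auto.
  - apply fimg_filter. exact (cv_filter PX F x Fx).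
  - now apply fsub_fimg_ext.
Qed.

Lemma cont_id (X : space) : is_pstop X -> cont X X (fun x => x).
Proof.
  intros PX F x Fx. apply (cv_fsub PX F); auto.
  - apply fimg_filter. exact (cv_filter PX F x Fx).
  - intros A FA. exists A. split; auto.
Qed.

Lemma cont_const (X Y : space) (y : pt Y) : is_pstop X -> is_pstop Y -> cont X Y (fun _ => y).
Proof.
  intros PX PY F x Fx. pose proof (cv_filter PX F x Fx) as HF.
  apply (cv_fsub PY (principal y)); [now apply cv_principal|now apply fimg_filter|].
  intros B By. exists (fun _ => True). split; auto. now apply filterT.
Qed.

Lemma prod_pstop (X Y : space) : is_pstop X -> is_pstop Y -> is_pstop (prod_space X Y).
Proof.
  intros PX PY.
  assert (Hfsub : forall F G p, cv (prod_space X Y) F p -> is_filter G -> fsub F G ->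
    cv (prod_space X Y) G p).
  { intros F G p [HF [HX HY]] HG FG. split; [exact HG|]. split.
    - apply (cv_fsub PX (fimg fst F)); auto; [now apply fimg_filter|now apply fimg_fsub].
    - apply (cv_fsub PY (fimg snd F)); auto; [now apply fimg_filter|now apply fimg_fsub]. }
  split; [|split; [exact Hfsub|split]].
  - now intros F p [].
  - intros p. split; [apply principal_filter|]. split.
    + apply (cv_fsub PX (principal (fst p))); [now apply cv_principal| |].
      * apply fimg_filter, principal_filter.
      * apply (fsub_principal_fimg fst).
    + apply (cv_fsub PY (principal (snd p))); [now apply cv_principal| |].
      * apply fimg_filter, principal_filter.
      * apply (fsub_principal_fimg snd).
  - intros F p HF. split.
    + intros Fp U UU FU. exact (Hfsub F U p Fp (ultra_filter U UU) FU).
    + intros HU. split; [exact HF|]. split.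
      * apply (cv_fimg_of_ultra PX); [exact HF|]. intros U UU FU. apply (HU U UU FU).
      * apply (cv_fimg_of_ultra PY); [exact HF|]. intros U UU FU. apply (HU U UU FU).
Qed.

Lemma cont_fst (X Y : space) : cont (prod_space X Y) X fst.
Proof. now intros F p (_ & HX & _). Qed.

Lemma cont_snd (X Y : space) : cont (prod_space X Y) Y snd.
Proof. now intros F p (_ & _ & HY). Qed.

Lemma cont_pair (Z X Y : space) (g : pt Z -> pt X) (h : pt Z -> pt Y) :
  is_pstop Z -> is_pstop X -> is_pstop Y -> cont Z X g -> cont Z Y h ->
  cont Z (prod_space X Y) (fun z => (g z, h z)).
Proof.
  intros PZ PX PY cg ch F z Fz. pose proof (cv_filter PZ F z Fz) as HF.
  split; [now apply fimg_filter|]. simpl. split.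
  - apply (cv_fsub PX (fimg g F)); auto; [now do 2 apply fimg_filter|].
    apply (fsub_comp_fimg (fun z => (g z, h z)) fst).
  - apply (cv_fsub PY (fimg h F)); auto; [now do 2 apply fimg_filter|].
    apply (fsub_comp_fimg (fun z => (g z, h z)) snd).
Qed.

Lemma I01_ext (s t : I01) : proj1_sig s = proj1_sig t -> s = t.
Proof.
  destruct s as [s Hs], t as [t Ht]. simpl. intros <-. f_equal. apply proof_irrelevance.
Qed.

Lemma interval_pstop : is_pstop interval_space.
Proof.
  split; [|split; [|split]].
  - now intros F t [].
  - intros F G t [HF HN] HG FG. split; auto.
  - intros t. split; [apply principal_filter|]. intros N [eps [Heps HN]]. apply HN.
    unfold Rminus. now rewrite Rplus_opp_r, Rabs_R0.
  - intros F t HF. split.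
    + intros [_ HN] U UU FU. split; [now apply ultra_filter|]. auto.
    + intros HU. split; [exact HF|]. intros N Nt. apply NNPP. intros nFN.
      destruct (ultra_extend_avoid F N HF nFN) as [W [UW [FW WnN]]].
      destruct (HU W UW FW) as [HW WN]. apply (filter_proper W HW).
      apply (filterS W HW (fun s => N s /\ ~ N s)); [|tauto].
      apply (filterI W HW); auto.
Qed.

Definition rcont (Z : space) (h : pt Z -> R) : Prop :=
  forall F z, cv Z F z -> forall eps, 0 < eps -> F (fun z' => Rabs (h z' - h z) < eps).

Lemma cont_interval_of_rcont (Z : space) (h : pt Z -> I01) : is_pstop Z ->
  rcont Z (fun z => proj1_sig (h z)) -> cont Z interval_space h.
Proof.
  intros PZ rh F z Fz. split; [apply fimg_filter; exact (cv_filter PZ F z Fz)|].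
  intros N [eps [Heps HN]].
  exists (fun z' => Rabs (proj1_sig (h z') - proj1_sig (h z)) < eps).
  split; [now apply rh|]. intros z' Hz'. now apply HN.
Qed.

Lemma rcont_of_cont_interval (Z : space) (h : pt Z -> I01) : is_pstop Z ->
  cont Z interval_space h -> rcont Z (fun z => proj1_sig (h z)).
Proof.
  intros PZ ch F z Fz eps Heps. destruct (ch F z Fz) as [_ HN].
  destruct (HN (fun s => Rabs (proj1_sig s - proj1_sig (h z)) < eps)) as [A [FA HA]].
  - exists eps. auto.
  - exact (filterS F (cv_filter PZ F z Fz) A _ FA HA).
Qed.

Section RealContinuity.
Variable Z : space.
Hypothesis PZ : is_pstop Z.

Lemma rcont_const c : rcont Z (fun _ => c).
Proof.
  intros F z Fz eps Heps. apply (filterS F (cv_filter PZ F z Fz) (fun _ => True)).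
  - exact (filterT F (cv_filter PZ F z Fz)).
  - intros _ _. unfold Rminus. now rewrite Rplus_opp_r, Rabs_R0.
Qed.

Lemma rcont_lipschitz (op : R -> R -> R) (L : R) h1 h2 : 0 < L ->
  (forall a b a' b', Rabs (op a' b' - op a b) <= L * (Rabs (a' - a) + Rabs (b' - b))) ->
  rcont Z h1 -> rcont Z h2 -> rcont Z (fun z => op (h1 z) (h2 z)).
Proof.
  intros HL Hop r1 r2 F z Fz eps Heps. pose proof (cv_filter PZ F z Fz) as HF.
  assert (Hd : 0 < eps / (2 * L)) by (apply Rdiv_lt_0_compat; lra).
  apply (filterS F HF _ _ (filterI F HF _ _ (r1 F z Fz _ Hd) (r2 F z Fz _ Hd))).
  intros z' [H1 H2]. eapply Rle_lt_trans; [apply Hop|].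
  replace eps with (L * (eps / (2 * L) + eps / (2 * L))) by (field; lra).
  apply Rmult_lt_compat_l; lra.
Qed.

Lemma rcont_lipschitz1 (op : R -> R) (L : R) h : 0 < L ->
  (forall a a', Rabs (op a' - op a) <= L * Rabs (a' - a)) ->
  rcont Z h -> rcont Z (fun z => op (h z)).
Proof.
  intros HL Hop rh. apply (rcont_lipschitz (fun a _ => op a) L h h); auto.
  intros a b a' b'. pose proof (Rabs_pos (b' - b)). specialize (Hop a a'). nra.
Qed.

Lemma rcont_plus h1 h2 : rcont Z h1 -> rcont Z h2 -> rcont Z (fun z => h1 z + h2 z).
Proof.
  apply (rcont_lipschitz Rplus 1); [lra|]. intros a b a' b'.
  replace (a' + b' - (a + b)) with ((a' - a) + (b' - b)) by ring.
  pose proof (Rabs_triang (a' - a) (b' - b)). lra.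
Qed.

Lemma rcont_minus h1 h2 : rcont Z h1 -> rcont Z h2 -> rcont Z (fun z => h1 z - h2 z).
Proof.
  apply (rcont_lipschitz Rminus 1); [lra|]. intros a b a' b'.
  replace (a' - b' - (a - b)) with ((a' - a) + - (b' - b)) by ring.
  pose proof (Rabs_triang (a' - a) (- (b' - b))). rewrite Rabs_Ropp in *. lra.
Qed.

Lemma rcont_scal c h : rcont Z h -> rcont Z (fun z => c * h z).
Proof.
  apply (rcont_lipschitz1 (Rmult c) (Rabs c + 1)); [pose proof (Rabs_pos c); lra|].
  intros a a'. replace (c * a' - c * a) with (c * (a' - a)) by ring.
  rewrite Rabs_mult. pose proof (Rabs_pos (a' - a)). nra.
Qed.

Lemma rcont_div c h : rcont Z h -> rcont Z (fun z => h z / c).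
Proof.
  apply (rcont_lipschitz1 (fun a => a / c) (Rabs (/ c) + 1)); [pose proof (Rabs_pos (/ c)); lra|].
  intros a a'. replace (a' / c - a / c) with (/ c * (a' - a)) by (unfold Rdiv; ring).
  rewrite Rabs_mult. pose proof (Rabs_pos (a' - a)). nra.
Qed.

Lemma rcont_opp h : rcont Z h -> rcont Z (fun z => - h z).
Proof.
  apply (rcont_lipschitz1 Ropp 1); [lra|]. intros a a'.
  replace (- a' - - a) with (- (a' - a)) by ring. rewrite Rabs_Ropp. lra.
Qed.

Lemma rcont_abs h : rcont Z h -> rcont Z (fun z => Rabs (h z)).
Proof.
  apply (rcont_lipschitz1 Rabs 1); [lra|]. intros a a'.
  pose proof (Rabs_triang_inv2 a' a). lra.
Qed.

Lemma rcont_max h1 h2 : rcont Z h1 -> rcont Z h2 -> rcont Z (fun z => Rmax (h1 z) (h2 z)).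
Proof.
  apply (rcont_lipschitz Rmax 1); [lra|]. intros a b a' b'.
  pose proof (Rabs_pos (a' - a)). pose proof (Rabs_pos (b' - b)).
  pose proof (Rle_abs (a' - a)). pose proof (Rle_abs (- (a' - a))).
  pose proof (Rle_abs (b' - b)). pose proof (Rle_abs (- (b' - b))).
  rewrite Rabs_Ropp in *. apply Rabs_le.
  unfold Rmax. destruct (Rle_dec a b), (Rle_dec a' b'); lra.
Qed.

Lemma rcont_min h1 h2 : rcont Z h1 -> rcont Z h2 -> rcont Z (fun z => Rmin (h1 z) (h2 z)).
Proof.
  apply (rcont_lipschitz Rmin 1); [lra|]. intros a b a' b'.
  pose proof (Rabs_pos (a' - a)). pose proof (Rabs_pos (b' - b)).
  pose proof (Rle_abs (a' - a)). pose proof (Rle_abs (- (a' - a))).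
  pose proof (Rle_abs (b' - b)). pose proof (Rle_abs (- (b' - b))).
  rewrite Rabs_Ropp in *. apply Rabs_le.
  unfold Rmin. destruct (Rle_dec a b), (Rle_dec a' b'); lra.
Qed.

Lemma rcont_le_limit c a F z : rcont Z c -> cv Z F z ->
  F (fun z' => c z' <= a) -> c z <= a.
Proof.
  intros rc Fz Fa. pose proof (cv_filter PZ F z Fz) as HF. apply Rnot_lt_le. intros Hlt.
  apply (filter_proper F HF).
  apply (filterS F HF _ _ (filterI F HF _ _ Fa (rc F z Fz (c z - a) ltac:(lra)))).
  intros z' [Hle Hnear]. apply Rabs_def2 in Hnear. lra.
Qed.

Lemma rcont_ge_limit c a F z : rcont Z c -> cv Z F z ->
  F (fun z' => a <= c z') -> a <= c z.
Proof.
  intros rc Fz Fa. enough (- c z <= - a) by lra.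
  apply (rcont_le_limit (fun z' => - c z') (- a) F z); [now apply rcont_opp|exact Fz|].
  apply (filterS F (cv_filter PZ F z Fz) _ _ Fa). intros z' H. lra.
Qed.

Lemma cont_paste (Y : space) (h g1 g2 : pt Z -> pt Y) (c : pt Z -> R) (a : R) :
  is_pstop Y -> rcont Z c -> cont Z Y g1 -> cont Z Y g2 ->
  (forall z, c z <= a -> h z = g1 z) -> (forall z, a <= c z -> h z = g2 z) -> cont Z Y h.
Proof.
  intros PY rc c1 c2 E1 E2. apply cont_of_ultra; auto. intros U z UU Uz.
  pose proof (ultra_filter U UU) as HU.
  assert (Hpiece : forall g S, cont Z Y g -> U S -> (forall z', S z' -> h z' = g z') ->
    h z = g z -> cv Y (fimg h U) (h z)).
  { intros g S cg US Eg Ez. rewrite Ez. apply (cv_fsub PY (fimg g U)); auto.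
    - now apply fimg_filter.
    - apply (fsub_fimg_agree g h U S HU US). intros; symmetry; auto. }
  destruct (ultra_or_compl U UU (fun z' => c z' <= a)) as [Ule|Ugt].
  - apply (Hpiece g1 _ c1 Ule E1), E1, (rcont_le_limit c a U z); auto.
  - assert (Uge : U (fun z' => a <= c z')).
    { apply (filterS U HU _ _ Ugt). intros z' H. lra. }
    apply (Hpiece g2 _ c2 Uge E2), E2, (rcont_ge_limit c a U z); auto.
Qed.

End RealContinuity.

Lemma cyl_pstop (X : space) : is_pstop X -> is_pstop (cyl X).
Proof. intros PX. apply prod_pstop; [exact PX|exact interval_pstop]. Qed.

Lemma cont_cyl_fst (X : space) : cont (cyl X) X fst.
Proof. apply cont_fst. Qed.

Lemma cont_cyl_snd (X : space) : cont (cyl X) interval_space snd.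
Proof. apply cont_snd. Qed.

Lemma cont_ik (k : bool) (X : space) : is_pstop X -> cont X (cyl X) (ik k).
Proof.
  intros PX. apply cont_pair; auto using interval_pstop, cont_id, cont_const.
Qed.

Lemma cont_cyl_map (X Y : space) (f : pt X -> pt Y) : is_pstop X -> is_pstop Y ->
  cont X Y f -> cont (cyl X) (cyl Y) (cyl_map f).
Proof.
  intros PX PY cf. pose proof (cyl_pstop X PX).
  apply cont_pair; auto using interval_pstop, cont_cyl_snd.
  apply (cont_comp _ X); auto using cont_cyl_fst.
Qed.

Lemma empty_pstop : is_pstop empty_space.
Proof. split; [|split; [|split]]; simpl; try tauto; intros ? []. Qed.

Lemma cont_of_empty (Y : space) (g : pt empty_space -> pt Y) : cont empty_space Y g.
Proof. intros F []. Qed.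

Lemma cont_of_cyl_empty (Y : space) (g : pt (cyl empty_space) -> pt Y) :
  cont (cyl empty_space) Y g.
Proof. intros F [[] t]. Qed.

Lemma empty_initial : is_initial empty_space.
Proof.
  intros Y PY. split; [exists (empty_map Y); apply cont_of_empty|]. now intros f g _ _ [].
Qed.

Lemma cyl_empty_initial : is_initial (cyl empty_space).
Proof.
  intros Y PY. split; [exists (fun q => empty_map Y (fst q)); apply cont_of_cyl_empty|].
  now intros f g _ _ [[] t].
Qed.

Lemma iso_cof (X Y : space) (f : pt X -> pt Y) : is_pstop X -> is_pstop Y ->
  is_iso X Y f -> cof X Y f.
Proof.
  intros PX PY [cf [g [cg [gf fg]]]]. split; [exact cf|].
  intros k Z PZ h G ch cG E. exists (fun q => G (cyl_map g q)). split; [|split].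
  - apply (cont_comp _ (cyl X)); auto using cyl_pstop, cont_cyl_map.
  - intros y. unfold cyl_map, ik. simpl. rewrite <- (fg y) at 2. now rewrite E.
  - intros [x t]. unfold cyl_map. simpl. now rewrite gf.
Qed.

Lemma empty_cof (X : space) : is_pstop X -> cof empty_space X (empty_map X).
Proof.
  intros PX. split; [apply cont_of_empty|].
  intros k Y PY f G cf cG E. exists (fun q => f (fst q)). split; [|split].
  - apply (cont_comp _ X); auto using cyl_pstop, cont_cyl_fst.
  - now intros a.
  - now intros [[] t].
Qed.

Lemma comp_cof (X Y Z : space) (f : pt X -> pt Y) (g : pt Y -> pt Z) :
  is_pstop X -> is_pstop Y -> is_pstop Z ->
  cof X Y f -> cof Y Z g -> cof X Z (fun x => g (f x)).
Proof.
  intros PX PY PZ [cf hf] [cg hg]. split; [now apply (cont_comp _ Y)|].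
  intros k W PW h G ch cG E.
  destruct (hf k W PW (fun y => h (g y)) G) as [H1 [cH1 [H1k H1f]]];
    [now apply (cont_comp Y Z W)|exact cG|exact E|].
  destruct (hg k W PW h H1 ch cH1) as [H2 [cH2 [H2k H2g]]]; [intros y; now rewrite H1k|].
  exists H2. split; [exact cH2|]. split; [exact H2k|].
  intros q. rewrite <- H1f, <- H2g. reflexivity.
Qed.

Section DoubleCylinder.
Variable X : space.
Hypothesis PX : is_pstop X.

Let PIX := cyl_pstop X PX.
Let PIIX := cyl_pstop (cyl X) PIX.

Lemma cont_fst_fst : cont (cyl (cyl X)) X (fun p => fst (fst p)).
Proof. apply (cont_comp _ (cyl X)); auto using cont_cyl_fst. Qed.

Lemma cont_snd_fst : cont (cyl (cyl X)) interval_space (fun p => snd (fst p)).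
Proof. apply (cont_comp _ (cyl X)); auto using interval_pstop, cont_cyl_fst, cont_cyl_snd. Qed.

Lemma cont_drop_middle : cont (cyl (cyl X)) (cyl X) (fun p => (fst (fst p), snd p)).
Proof. apply cont_pair; auto using interval_pstop, cont_fst_fst, cont_cyl_snd. Qed.

Lemma cont_swap_last :
  cont (cyl (cyl X)) (cyl (cyl X)) (fun p => ((fst (fst p), snd p), snd (fst p))).
Proof. apply cont_pair; auto using interval_pstop, cont_drop_middle, cont_snd_fst. Qed.

Lemma interchange :
  exists T : pt (cyl (cyl X)) -> pt (cyl (cyl X)),
    cont (cyl (cyl X)) (cyl (cyl X)) T /\
    forall k : bool,
      (forall q : pt (cyl X), T (ik k q) = cyl_map (ik k) q) /\
      (forall q : pt (cyl X), T (cyl_map (ik k) q) = ik k q).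
Proof.
  exists (fun p => ((fst (fst p), snd p), snd (fst p))). split; [exact cont_swap_last|].
  now intros k; split; intros [x t].
Qed.

End DoubleCylinder.

Definition sum3 (X1 X2 X3 : space) : Type := ((pt X1 + pt X2) + pt X3)%type.

Definition in1 {X1 X2 X3 : space} (x : pt X1) : sum3 X1 X2 X3 := inl (inl x).
Definition in2 {X1 X2 X3 : space} (x : pt X2) : sum3 X1 X2 X3 := inl (inr x).
Definition in3 {X1 X2 X3 : space} (x : pt X3) : sum3 X1 X2 X3 := inr x.

Definition case3 {X1 X2 X3 : space} {T : Type}
    (g1 : pt X1 -> T) (g2 : pt X2 -> T) (g3 : pt X3 -> T) (s : sum3 X1 X2 X3) : T :=
  match s with inl (inl x) => g1 x | inl (inr x) => g2 x | inr x => g3 x end.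

Section Glue.
Variables X1 X2 X3 : space.
Variable R : relation (sum3 X1 X2 X3).

Definition quot : Type :=
  { C : sum3 X1 X2 X3 -> Prop | exists s, C = clos_refl_sym_trans _ R s }.

Definition cls (s : sum3 X1 X2 X3) : quot :=
  exist _ (clos_refl_sym_trans _ R s) (ex_intro _ s eq_refl).

Definition rep (q : quot) : sum3 X1 X2 X3 :=
  proj1_sig (constructive_indefinite_description _ (proj2_sig q)).

Definition respects {T : Type} (g : sum3 X1 X2 X3 -> T) : Prop :=
  forall s s', R s s' -> g s = g s'.

Lemma cls_eq s s' : R s s' -> cls s = cls s'.
Proof.
  intros Hs. apply subset_eq_compat. apply functional_extensionality. intros s''.
  apply propositional_extensionality. split; intros H.
  - apply rst_trans with s; [apply rst_sym, rst_step|]; assumption.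
  - apply rst_trans with s'; [apply rst_step|]; assumption.
Qed.

Lemma cls_surj (q : quot) : exists s, q = cls s.
Proof. destruct q as [C [s ->]]. exists s. now apply subset_eq_compat. Qed.

Lemma cls_rep {T : Type} (g : sum3 X1 X2 X3 -> T) : respects g ->
  forall s, g (rep (cls s)) = g s.
Proof.
  intros Hg s. unfold rep. destruct constructive_indefinite_description as [s' Es']. simpl.
  assert (Hss' : clos_refl_sym_trans _ R s' s) by (rewrite <- Es'; apply rst_refl).
  clear Es'. induction Hss'; auto. congruence.
Qed.

Definition chart_cv (X : space) (e : pt X -> sum3 X1 X2 X3)
    (F : (quot -> Prop) -> Prop) (q : quot) : Prop :=
  exists G x, cv X G x /\ cls (e x) = q /\ fsub (fimg (fun y => cls (e y)) G) F.

(* The pseudotopological modification of the final convergence on the quotient. *)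
Definition glue : space :=
  Space quot (fun F q => is_filter F /\
    forall U, is_ultrafilter U -> fsub F U ->
      chart_cv X1 in1 U q \/ chart_cv X2 in2 U q \/ chart_cv X3 in3 U q).

Hypotheses (P1 : is_pstop X1) (P2 : is_pstop X2) (P3 : is_pstop X3).

Lemma glue_pstop : is_pstop glue.
Proof.
  split; [|split; [|split]].
  - now intros F q [].
  - intros F G q [HF HU] HG FG. split; [exact HG|].
    intros U UU GU. apply HU; [exact UU|]. now apply (fsub_trans F G U).
  - intros q. split; [apply principal_filter|]. intros U UU qU.
    destruct (cls_surj q) as [[[x|x]|x] ->]; [left|right; left|right; right];
      exists (principal x), x; (split; [now apply cv_principal|split; [reflexivity|]]);
      (eapply fsub_trans; [|exact qU]); intros B [A [Ax HA]]; exact (HA x Ax).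
  - intros F q HF. split.
    + intros [_ HU] U UU FU. split; [now apply ultra_filter|].
      intros V UV UsV. apply HU; [exact UV|]. now apply (fsub_trans F U V).
    + intros HU. split; [exact HF|]. intros U UU FU.
      now apply (HU U UU FU); [|apply fsub_refl].
Qed.

Lemma cont_in1 : cont X1 glue (fun x => cls (in1 x)).
Proof.
  intros F x Fx. split; [apply fimg_filter; exact (cv_filter P1 F x Fx)|].
  intros U UU FU. left. now exists F, x.
Qed.

Lemma cont_in2 : cont X2 glue (fun x => cls (in2 x)).
Proof.
  intros F x Fx. split; [apply fimg_filter; exact (cv_filter P2 F x Fx)|].
  intros U UU FU. right; left. now exists F, x.
Qed.

Lemma cont_in3 : cont X3 glue (fun x => cls (in3 x)).
Proof.
  intros F x Fx. split; [apply fimg_filter; exact (cv_filter P3 F x Fx)|].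
  intros U UU FU. right; right. now exists F, x.
Qed.

Lemma ultra_chart_lift (Z X : space) (e : pt X -> sum3 X1 X2 X3) U q z :
  is_pstop X -> is_pstop Z -> is_ultrafilter U ->
  cv Z (fimg snd U) z -> chart_cv X e (fimg fst U) q ->
  exists V x, is_ultrafilter V /\ cls (e x) = q /\ cv (prod_space X Z) V (x, z) /\
    fsub (fimg (fun p : pt X * pt Z => (cls (e (fst p)), snd p)) V) U.
Proof.
  intros PX PZ UU Uz [G [x [Gx [<- GU]]]]. pose proof (cv_filter PX G x Gx) as HG.
  set (f := fun p : pt X * pt Z => (cls (e (fst p)), snd p)).
  set (F := fun C : pt X * pt Z -> Prop => exists A, G A /\ forall p, A (fst p) -> C p).
  assert (HF : is_filter F).
  { repeat split.
    - exists (fun _ => True). split; auto. now apply filterT.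
    - intros [A [GA HA]]. destruct (filter_ex G HG A GA) as [y Ay]. exact (HA (y, z) Ay).
    - intros C D [A [GA HA]] CD. exists A. split; auto.
    - intros C D [A [GA HA]] [A' [GA' HA']]. exists (fun y => A y /\ A' y).
      split; [now apply filterI|]. intros p []. split; auto. }
  assert (FU : fsub (fimg f F) U).
  { intros S [C [[A [GA HA]] HC]].
    destruct (GU (fun r => exists y, A y /\ cls (e y) = r)) as [C' [UC' HC']].
    { exists A. split; eauto. }
    apply (filterS U (ultra_filter U UU) C' _ UC'). intros [r w] C'r.
    destruct (HC' _ C'r) as [y [Ay Ey]]. simpl in Ey. subst r.
    exact (HC (y, w) (HA (y, w) Ay)). }
  destruct (ultra_lift f F U HF UU FU) as [V [UV [FV VU]]].
  exists V, x. split; [exact UV|]. split; [reflexivity|]. split; [|exact VU].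
  assert (UfV : fsub U (fimg f V)).
  { apply (proj2 (fimg_ultra f V UV)); [now apply ultra_filter|exact VU]. }
  split; [now apply ultra_filter|]. split.
  - apply (cv_fsub PX G); [exact Gx|now apply fimg_filter, ultra_filter|].
    intros A GA. exists (fun p => A (fst p)). split; auto. apply FV. now exists A.
  - apply (cv_fsub PZ (fimg snd U)); [exact Uz|now apply fimg_filter, ultra_filter|].
    apply (fsub_trans _ _ _ (fimg_fsub snd _ _ UfV)). apply (fsub_fimg_comp f snd).
Qed.

Variables Z Y : space.
Hypotheses (PZ : is_pstop Z) (PY : is_pstop Y).
Variable g : sum3 X1 X2 X3 -> pt Z -> pt Y.
Hypothesis g_resp : forall z, respects (fun s => g s z).

Lemma cv_glue_prod_chart (X : space) (e : pt X -> sum3 X1 X2 X3) U p :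
  is_pstop X -> cont (prod_space X Z) Y (fun p => g (e (fst p)) (snd p)) ->
  is_ultrafilter U -> cv (prod_space glue Z) U p ->
  chart_cv X e (fimg fst U) (fst p) ->
  cv Y (fimg (fun p => g (rep (fst p)) (snd p)) U) (g (rep (fst p)) (snd p)).
Proof.
  intros PX cg UU [_ [_ Uz]] Uchart.
  destruct (ultra_chart_lift Z X e U (fst p) (snd p) PX PZ UU Uz Uchart)
    as [V [x [UV [Ex [Vx VU]]]]].
  destruct p as [q z]. simpl in *. subst q.
  set (h := fun p : pt (prod_space glue Z) => g (rep (fst p)) (snd p)).
  assert (Hh : forall y w, h (cls (e y), w) = g (e y) w).
  { intros y w. exact (cls_rep (fun s => g s w) (g_resp w) (e y)). }
  change (cv Y (fimg h U) (h (cls (e x), z))). rewrite Hh.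
  apply (cv_fsub PY _ _ _ (cg V (x, z) Vx)).
  - apply fimg_filter, ultra_filter, UU.
  - eapply fsub_trans; [apply (fsub_fimg_ext _ (fun p => h (cls (e (fst p)), snd p)))|].
    + intros [y w]. symmetry. apply Hh.
    + eapply fsub_trans; [apply (fsub_comp_fimg (fun p => (cls (e (fst p)), snd p)) h)|].
      now apply fimg_fsub.
Qed.

Lemma cont_glue_prod :
  cont (prod_space X1 Z) Y (fun p => g (in1 (fst p)) (snd p)) ->
  cont (prod_space X2 Z) Y (fun p => g (in2 (fst p)) (snd p)) ->
  cont (prod_space X3 Z) Y (fun p => g (in3 (fst p)) (snd p)) ->
  cont (prod_space glue Z) Y (fun p => g (rep (fst p)) (snd p)).
Proof.
  intros c1 c2 c3. apply cont_of_ultra; auto using prod_pstop, glue_pstop.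
  intros U p UU Up. pose proof Up as (_ & (_ & Hchart) & _).
  destruct (Hchart _ (fimg_ultra fst U UU) (fsub_refl _)) as [Hc|[Hc|Hc]].
  - exact (cv_glue_prod_chart X1 in1 U p P1 c1 UU Up Hc).
  - exact (cv_glue_prod_chart X2 in2 U p P2 c2 UU Up Hc).
  - exact (cv_glue_prod_chart X3 in3 U p P3 c3 UU Up Hc).
Qed.

End Glue.

Arguments cls {X1 X2 X3} R s.
Arguments rep {X1 X2 X3 R} q.
Arguments respects {X1 X2 X3} R {T} g.
Arguments cls_eq {X1 X2 X3 R} s s'.
Arguments cls_surj {X1 X2 X3 R} q.
Arguments cls_rep {X1 X2 X3 R T} g _ s.

Lemma cont_glue (X1 X2 X3 : space) (R : relation (sum3 X1 X2 X3)) (Y : space)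
    (g : sum3 X1 X2 X3 -> pt Y) :
  is_pstop X1 -> is_pstop X2 -> is_pstop X3 -> is_pstop Y -> respects R g ->
  cont X1 Y (fun x => g (in1 x)) -> cont X2 Y (fun x => g (in2 x)) ->
  cont X3 Y (fun x => g (in3 x)) -> cont (glue X1 X2 X3 R) Y (fun q => g (rep q)).
Proof.
  intros P1 P2 P3 PY Hg c1 c2 c3. pose proof interval_pstop as PI.
  pose proof (glue_pstop X1 X2 X3 R P1 P2 P3) as PG.
  assert (Hfst : forall X (c : pt X -> pt Y), is_pstop X -> cont X Y c ->
    cont (prod_space X interval_space) Y (fun p => c (fst p))).
  { intros X c PX cc. apply (cont_comp _ X); auto using prod_pstop. apply cont_fst. }
  apply (cont_comp _ (prod_space (glue X1 X2 X3 R) interval_space) _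
    (fun q => (q, zero01)) (fun p => g (rep (fst p)))); auto using prod_pstop.
  - apply cont_pair; auto using cont_id, cont_const.
  - apply (cont_glue_prod X1 X2 X3 R P1 P2 P3 interval_space Y PI PY (fun s _ => g s)).
    + intros _. exact Hg.
    + exact (Hfst X1 (fun x => g (in1 x)) P1 c1).
    + exact (Hfst X2 (fun x => g (in2 x)) P2 c2).
    + exact (Hfst X3 (fun x => g (in3 x)) P3 c3).
Qed.

Section Pushout.
Variables B A X : space.
Variables (i : pt B -> pt A) (f : pt B -> pt X).
Hypotheses (PA : is_pstop A) (PX : is_pstop X).

(* The pushout A ∪_B X, as a gluing whose third summand is empty. *)
Definition po_rel : relation (sum3 A X empty_space) :=
  fun s s' => exists b, s = in1 (i b) /\ s' = in2 (f b).
Definition po : space := glue A X empty_space po_rel.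
Definition po_u (a : pt A) : pt po := cls po_rel (in1 a).
Definition po_v (x : pt X) : pt po := cls po_rel (in2 x).

Lemma po_pstop : is_pstop po.
Proof. apply glue_pstop; auto using empty_pstop. Qed.

Lemma cont_po_u : cont A po po_u.
Proof. apply cont_in1; auto using empty_pstop. Qed.

Lemma cont_po_v : cont X po po_v.
Proof. apply cont_in2; auto using empty_pstop. Qed.

Lemma po_comm b : po_u (i b) = po_v (f b).
Proof. apply cls_eq. now exists b. Qed.

Lemma po_pushout : is_pushout B A X po i f po_u po_v.
Proof.
  split; [exact po_pstop|]. split; [exact cont_po_u|]. split; [exact cont_po_v|].
  split; [exact po_comm|].
  intros Y PY g h cg ch E. set (gh := case3 g h (empty_map Y)).
  assert (Hgh : respects po_rel gh) by (intros s s' [b [-> ->]]; apply E).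
  exists (fun q => gh (rep q)). split; [|split; [|split]].
  - apply cont_glue; auto using empty_pstop, cont_of_empty.
  - intros a. exact (cls_rep gh Hgh (in1 a)).
  - intros x. exact (cls_rep gh Hgh (in2 x)).
  - intros k ck Ek1 Ek2 p. destruct (cls_surj p) as [[[a|x]|[]] ->];
      rewrite (cls_rep gh Hgh); [apply Ek1|apply Ek2].
Qed.

Lemma cyl_po_pushout : is_pushout (cyl B) (cyl A) (cyl X) (cyl po)
  (cyl_map i) (cyl_map f) (cyl_map po_u) (cyl_map po_v).
Proof.
  pose proof interval_pstop as PI. pose proof po_pstop as PP.
  split; [now apply cyl_pstop|].
  split; [apply cont_cyl_map; auto using cont_po_u|].
  split; [apply cont_cyl_map; auto using cont_po_v|].
  split; [intros [b t]; unfold cyl_map; simpl; now rewrite po_comm|].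
  intros Y PY g h cg ch E.
  set (gh := fun s (t : I01) => case3 (fun a => g (a, t)) (fun x => h (x, t)) (empty_map Y) s).
  assert (Hgh : forall t, respects po_rel (fun s => gh s t)).
  { intros t s s' [b [-> ->]]. apply (E (b, t)). }
  exists (fun p => gh (rep (fst p)) (snd p)). split; [|split; [|split]].
  - apply (cont_glue_prod A X empty_space po_rel PA PX empty_pstop interval_space Y PI PY gh Hgh).
    + apply (cont_ext _ _ g); auto using cyl_pstop. now intros [a t].
    + apply (cont_ext _ _ h); auto using cyl_pstop. now intros [x t].
    + intros F [[] t].
  - intros [a t]. exact (cls_rep (fun s => gh s t) (Hgh t) (in1 a)).
  - intros [x t]. exact (cls_rep (fun s => gh s t) (Hgh t) (in2 x)).
  - intros k ck Ek1 Ek2 [p t]. simpl. destruct (cls_surj p) as [[[a|x]|[]] ->];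
      rewrite (cls_rep (fun s => gh s t) (Hgh t)); [apply (Ek1 (a, t))|apply (Ek2 (x, t))].
Qed.

End Pushout.

Arguments po {B A X} i f.
Arguments po_u {B A X} i f a.
Arguments po_v {B A X} i f x.

Lemma po_v_cof (B A X : space) (i : pt B -> pt A) (f : pt B -> pt X) :
  is_pstop B -> is_pstop A -> is_pstop X -> cof B A i -> cont B X f ->
  cof X (po i f) (po_v i f).
Proof.
  intros PB PA PX [ci hi] cf. pose proof (po_pstop B A X i f PA PX) as PP.
  split; [now apply cont_po_v|].
  intros k Y PY g G cg cG E.
  destruct (hi k Y PY (fun a => g (po_u i f a)) (fun q => G (cyl_map f q)))
    as [H [cH [Hk Hi]]].
  - apply (cont_comp _ (po i f)); auto using cont_po_u.
  - apply (cont_comp _ (cyl X)); auto using cyl_pstop, cont_cyl_map.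
  - intros b. rewrite po_comm. apply E.
  - destruct (cyl_po_pushout B A X i f PA PX) as (_ & _ & _ & _ & Huniv).
    destruct (Huniv Y PY H G cH cG Hi) as [K [cK [Ku [Kv _]]]].
    exists K. split; [exact cK|]. split; [|exact Kv].
    intros p. destruct (cls_surj p) as [[[a|x]|[]] ->].
    + change (K (cyl_map (po_u i f) (ik k a)) = g (po_u i f a)). now rewrite Ku.
    + change (K (cyl_map (po_v i f) (ik k x)) = g (po_v i f x)). now rewrite Kv, E.
Qed.

(* Through the retraction r : IA -> A ∪_B IB given by the HEP of i, an extension
   problem for Ii becomes one on I(A ∪_B IB) = IA ∪_IB I(IB), carrying the outer
   interval coordinate along. *)
Lemma cyl_map_HEP (B A : space) (i : pt B -> pt A) :
  is_pstop B -> is_pstop A -> cof B A i -> HEP (cyl B) (cyl A) (cyl_map i).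
Proof.
  intros PB PA [ci hi] k Y PY f G cf cG E.
  pose proof interval_pstop as PI.
  pose proof (cyl_pstop B PB) as PIB. pose proof (cyl_pstop A PA) as PIA.
  pose proof (po_pstop B A (cyl B) i (ik k) PA PIB) as PM.
  destruct (hi k _ PM (po_u i (ik k)) (po_v i (ik k))) as [r [cr [rk ri]]];
    auto using cont_po_u, cont_po_v, po_comm.
  set (Gs := fun p : pt (cyl (cyl B)) => G ((fst (fst p), snd p), snd (fst p))).
  destruct (cyl_po_pushout B A (cyl B) i (ik k) PA PIB) as (_ & _ & _ & _ & Huniv).
  assert (cGs : cont (cyl (cyl B)) Y Gs).
  { apply (cont_comp _ (cyl (cyl B)) _
      (fun p : pt (cyl (cyl B)) => ((fst (fst p), snd p), snd (fst p))) G);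
      auto using cyl_pstop, cont_swap_last. }
  assert (EGs : forall q, f (cyl_map i q) = Gs (cyl_map (ik k) q)).
  { intros [b t]. apply (E (b, t)). }
  destruct (Huniv Y PY f Gs cf cGs EGs) as [L [cL [Lu [Lv _]]]].
  exists (fun p => L (r (fst (fst p), snd p), snd (fst p))). split; [|split].
  - apply (cont_comp _ (cyl (po i (ik k)))); auto using cyl_pstop.
    apply cont_pair; auto using cyl_pstop, cont_snd_fst.
    apply (cont_comp _ (cyl A)); auto using cyl_pstop, cont_drop_middle.
  - intros [a t]. simpl. change (a, if k then one01 else zero01) with (ik k a).
    rewrite rk. apply (Lu (a, t)).
  - intros [[b t] w]. simpl. change (i b, w) with (cyl_map i (b, w)).
    rewrite ri. apply (Lv ((b, w), t)).
Qed.

Section DoublePushout.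
Variables B A : space.
Variable i : pt B -> pt A.
Hypotheses (PB : is_pstop B) (PA : is_pstop A).

Definition dpo_rel : relation (sum3 A (cyl B) A) :=
  fun s s' => (exists b, s = in1 (i b) /\ s' = in2 (ik false b)) \/
              (exists b, s = in3 (i b) /\ s' = in2 (ik true b)).
Definition dpo : space := glue A (cyl B) A dpo_rel.
Definition dpo_a0 (a : pt A) : pt dpo := cls dpo_rel (in1 a).
Definition dpo_c (q : pt (cyl B)) : pt dpo := cls dpo_rel (in2 q).
Definition dpo_a1 (a : pt A) : pt dpo := cls dpo_rel (in3 a).

Let PIB := cyl_pstop B PB.

Lemma dpo_pstop : is_pstop dpo.
Proof. now apply glue_pstop. Qed.

Lemma cont_dpo_a0 : cont A dpo dpo_a0.
Proof. now apply cont_in1. Qed.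

Lemma cont_dpo_c : cont (cyl B) dpo dpo_c.
Proof. now apply cont_in2. Qed.

Lemma cont_dpo_a1 : cont A dpo dpo_a1.
Proof. now apply cont_in3. Qed.

Lemma dpo_comm0 b : dpo_a0 (i b) = dpo_c (ik false b).
Proof. apply cls_eq. left. now exists b. Qed.

Lemma dpo_comm1 b : dpo_a1 (i b) = dpo_c (ik true b).
Proof. apply cls_eq. right. now exists b. Qed.

Lemma dpo_dpushout : is_dpushout B A dpo i dpo_a0 dpo_c dpo_a1.
Proof.
  split; [exact dpo_pstop|]. split; [exact cont_dpo_a0|].
  split; [exact cont_dpo_c|]. split; [exact cont_dpo_a1|].
  split; [exact dpo_comm0|]. split; [exact dpo_comm1|].
  intros Y PY g0 h g1 c0 ch c1 E0 E1. set (gh := case3 g0 h g1).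
  assert (Hgh : respects dpo_rel gh) by (intros s s' [[b [-> ->]]|[b [-> ->]]]; simpl; auto).
  exists (fun q => gh (rep q)). split; [|split; [|split; [|split]]].
  - now apply cont_glue.
  - intros a. exact (cls_rep gh Hgh (in1 a)).
  - intros q. exact (cls_rep gh Hgh (in2 q)).
  - intros a. exact (cls_rep gh Hgh (in3 a)).
  - intros k Ck Ek0 Ek Ek1 p. destruct (cls_surj p) as [[[a|q]|a] ->];
      rewrite (cls_rep gh Hgh); [apply Ek0|apply Ek|apply Ek1].
Qed.

Definition dpo_j (p : pt dpo) : pt (cyl A) := case3 (ik false) (cyl_map i) (ik true) (rep p).

Lemma dpo_j_respects : respects dpo_rel (case3 (ik false) (cyl_map i) (ik true)).
Proof. now intros s s' [[b [-> ->]]|[b [-> ->]]]. Qed.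

Lemma dpo_j_a0 a : dpo_j (dpo_a0 a) = ik false a.
Proof. exact (cls_rep _ dpo_j_respects (in1 a)). Qed.

Lemma dpo_j_c q : dpo_j (dpo_c q) = cyl_map i q.
Proof. exact (cls_rep _ dpo_j_respects (in2 q)). Qed.

Lemma dpo_j_a1 a : dpo_j (dpo_a1 a) = ik true a.
Proof. exact (cls_rep _ dpo_j_respects (in3 a)). Qed.

Lemma cont_dpo_j : cont B A i -> cont dpo (cyl A) dpo_j.
Proof.
  intros ci. pose proof (cyl_pstop A PA).
  apply cont_glue; simpl; auto using dpo_j_respects, cont_ik, cont_cyl_map.
Qed.

Lemma dpo_cases p :
  (exists a, p = dpo_a0 a) \/ (exists q, p = dpo_c q) \/ (exists a, p = dpo_a1 a).
Proof.
  destruct (cls_surj p) as [[[a|q]|a] ->]; [left|right; left|right; right];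
    eexists; reflexivity.
Qed.

End DoublePushout.

Arguments dpo {B A} i.
Arguments dpo_a0 {B A} i a.
Arguments dpo_c {B A} i q.
Arguments dpo_a1 {B A} i a.
Arguments dpo_j {B A} i p.

Definition clamp (lo hi x : R) : R := Rmax lo (Rmin hi x).

(* (t, v) |-> (psi_t, psi_w) is a piecewise-linear self-homeomorphism of the unit
   square with inverse (theta_t, theta_v). It maps the faces t = 0, v = 1 and t = 1
   onto the left, middle and right thirds of the bottom face. *)
Definition psi_t (t v : R) : R := t - 2/3 * clamp (-(v/2)) (v/2) (t - 1/2).
Definition psi_w (t v : R) : R := 1 - Rmax (2 * Rabs (t - 1/2)) v.
Definition theta_t (t w : R) : R := clamp (-((1 - w)/2)) ((1 - w)/2) (3 * (t - 1/2)) + 1/2.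
Definition theta_v (t w : R) : R := Rmax 0 (Rmin (1 - w) (3 * (1 - w) / 2 - 3 * Rabs (t - 1/2))).

Ltac piecewise_lra :=
  unfold psi_t, psi_w, theta_t, theta_v, clamp, Rmax, Rmin, Rabs in *;
  repeat (destruct Rle_dec || destruct Rcase_abs); lra.

Section Square.
Variables t v : R.
Hypotheses (Ht : 0 <= t <= 1) (Hv : 0 <= v <= 1).

Lemma psi_t_range : 0 <= psi_t t v <= 1.
Proof. piecewise_lra. Qed.

Lemma psi_w_range : 0 <= psi_w t v <= 1.
Proof. piecewise_lra. Qed.

Lemma theta_psi_t : theta_t (psi_t t v) (psi_w t v) = t.
Proof. piecewise_lra. Qed.

Lemma theta_psi_v : theta_v (psi_t t v) (psi_w t v) = v.
Proof. piecewise_lra. Qed.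

Lemma psi_w_faces : t = 0 \/ t = 1 \/ v = 1 -> psi_w t v = 0.
Proof. intros [-> | [-> | ->]]; piecewise_lra. Qed.

End Square.

Lemma psi_t_top t : 0 <= t <= 1 -> 1/3 <= psi_t t 1 <= 2/3.
Proof. intros. piecewise_lra. Qed.

Lemma psi_t_left v : 0 <= v <= 1 -> psi_t 0 v <= 1/3.
Proof. intros. piecewise_lra. Qed.

Lemma psi_t_right v : 0 <= v <= 1 -> 2/3 <= psi_t 1 v.
Proof. intros. piecewise_lra. Qed.

Lemma theta_t_left t : 0 <= t <= 1/3 -> theta_t t 0 = 0.
Proof. intros. piecewise_lra. Qed.

Lemma theta_v_middle t : 1/3 <= t <= 2/3 -> theta_v t 0 = 1.
Proof. intros. piecewise_lra. Qed.

Lemma theta_t_right t : 2/3 <= t <= 1 -> theta_t t 0 = 1.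
Proof. intros. piecewise_lra. Qed.

Lemma clamp01_range r : 0 <= clamp 0 1 r <= 1.
Proof. unfold clamp, Rmax, Rmin. repeat destruct Rle_dec; lra. Qed.

Definition to_I01 (r : R) : I01 := exist _ (clamp 0 1 r) (clamp01_range r).

Lemma to_I01_val r : 0 <= r <= 1 -> proj1_sig (to_I01 r) = r.
Proof. intros. simpl. unfold clamp, Rmax, Rmin. repeat destruct Rle_dec; lra. Qed.

Definition endpt (k : bool) : I01 := if k then one01 else zero01.

(* The coordinate in which the face w = k of the square becomes the face v = 1. *)
Definition orient (k : bool) (w : R) : R := if k then w else 1 - w.

Lemma orient_range k w : 0 <= w <= 1 -> 0 <= orient k w <= 1.
Proof. destruct k; simpl; lra. Qed.

Lemma orient_involutive k w : orient k (orient k w) = w.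
Proof. destruct k; simpl; ring. Qed.

Lemma orient_endpt k : orient k (proj1_sig (endpt k)) = 1.
Proof. destruct k; simpl; ring. Qed.

Definition Psi_t k (t w : I01) : I01 := to_I01 (psi_t (proj1_sig t) (orient k (proj1_sig w))).
Definition Psi_w k (t w : I01) : I01 := to_I01 (psi_w (proj1_sig t) (orient k (proj1_sig w))).
Definition Theta_t (t w : I01) : I01 := to_I01 (theta_t (proj1_sig t) (proj1_sig w)).
Definition Theta_w k (t w : I01) : I01 := to_I01 (orient k (theta_v (proj1_sig t) (proj1_sig w))).

Section SquareI01.
Variable k : bool.
Implicit Types t w : I01.

Let range t : 0 <= proj1_sig t <= 1 := proj2_sig t.
Let orange w : 0 <= orient k (proj1_sig w) <= 1 := orient_range k _ (range w).

Lemma Psi_t_val t w : proj1_sig (Psi_t k t w) = psi_t (proj1_sig t) (orient k (proj1_sig w)).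
Proof. apply to_I01_val, psi_t_range; auto. Qed.

Lemma Psi_w_val t w : proj1_sig (Psi_w k t w) = psi_w (proj1_sig t) (orient k (proj1_sig w)).
Proof. apply to_I01_val, psi_w_range; auto. Qed.

Lemma Theta_Psi_t t w : Theta_t (Psi_t k t w) (Psi_w k t w) = t.
Proof.
  apply I01_ext. unfold Theta_t. rewrite Psi_t_val, Psi_w_val, theta_psi_t; auto.
  now apply to_I01_val.
Qed.

Lemma Theta_Psi_w t w : Theta_w k (Psi_t k t w) (Psi_w k t w) = w.
Proof.
  apply I01_ext. unfold Theta_w. rewrite Psi_t_val, Psi_w_val, theta_psi_v; auto.
  rewrite orient_involutive. now apply to_I01_val.
Qed.

Lemma Psi_w_faces t w : proj1_sig t = 0 \/ proj1_sig t = 1 \/ w = endpt k ->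
  Psi_w k t w = zero01.
Proof.
  intros Hface. apply I01_ext. rewrite Psi_w_val. apply psi_w_faces; auto.
  destruct Hface as [H | [H | ->]]; auto using orient_endpt.
Qed.

Lemma Theta_Psi_t_bottom t w : Psi_w k t w = zero01 -> Theta_t (Psi_t k t w) zero01 = t.
Proof. intros Hw. rewrite <- Hw. apply Theta_Psi_t. Qed.

Lemma Theta_Psi_w_bottom t w : Psi_w k t w = zero01 -> Theta_w k (Psi_t k t w) zero01 = w.
Proof. intros Hw. rewrite <- Hw. apply Theta_Psi_w. Qed.

Lemma Psi_t_endpt t : 1/3 <= proj1_sig (Psi_t k t (endpt k)) <= 2/3.
Proof. rewrite Psi_t_val, orient_endpt. now apply psi_t_top. Qed.

Lemma Psi_t_zero w : proj1_sig (Psi_t k zero01 w) <= 1/3.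
Proof. rewrite Psi_t_val. now apply psi_t_left. Qed.

Lemma Psi_t_one w : 2/3 <= proj1_sig (Psi_t k one01 w).
Proof. rewrite Psi_t_val. now apply psi_t_right. Qed.

Lemma Theta_w_middle t : 1/3 <= proj1_sig t <= 2/3 -> Theta_w k t zero01 = endpt k.
Proof.
  intros Ht. apply I01_ext. unfold Theta_w. simpl proj1_sig at 2.
  rewrite theta_v_middle by exact Ht.
  destruct k; simpl; unfold clamp, Rmax, Rmin; repeat destruct Rle_dec; lra.
Qed.

End SquareI01.

Lemma Theta_t_left t : proj1_sig t <= 1/3 -> Theta_t t zero01 = zero01.
Proof.
  intros Ht. pose proof (proj2_sig t) as Ht01. simpl in Ht01.
  apply I01_ext. unfold Theta_t. simpl proj1_sig at 2.
  rewrite theta_t_left, to_I01_val by lra. reflexivity.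
Qed.

Lemma Theta_t_right t : 2/3 <= proj1_sig t -> Theta_t t zero01 = one01.
Proof.
  intros Ht. pose proof (proj2_sig t) as Ht01. simpl in Ht01.
  apply I01_ext. unfold Theta_t. simpl proj1_sig at 2.
  rewrite theta_t_right, to_I01_val by lra. reflexivity.
Qed.

Ltac rcont_auto :=
  repeat first [ assumption | apply rcont_const | apply rcont_plus | apply rcont_minus
    | apply rcont_opp | apply rcont_scal | apply rcont_div | apply rcont_max
    | apply rcont_min | apply rcont_abs ].

Section SquareContinuity.
Variable Z : space.
Hypothesis PZ : is_pstop Z.
Variables tt ww : pt Z -> I01.
Hypotheses (ctt : cont Z interval_space tt) (cww : cont Z interval_space ww).

Let rtt := rcont_of_cont_interval Z tt PZ ctt.
Let rww := rcont_of_cont_interval Z ww PZ cww.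

Lemma cont_Psi_t k : cont Z interval_space (fun z => Psi_t k (tt z) (ww z)).
Proof.
  apply cont_interval_of_rcont; [exact PZ|].
  unfold Psi_t, to_I01, psi_t, clamp, orient. simpl. destruct k; rcont_auto.
Qed.

Lemma cont_Psi_w k : cont Z interval_space (fun z => Psi_w k (tt z) (ww z)).
Proof.
  apply cont_interval_of_rcont; [exact PZ|].
  unfold Psi_w, to_I01, psi_w, clamp, orient. simpl. destruct k; rcont_auto.
Qed.

Lemma cont_Theta_t : cont Z interval_space (fun z => Theta_t (tt z) (ww z)).
Proof.
  apply cont_interval_of_rcont; [exact PZ|].
  unfold Theta_t, to_I01, theta_t, clamp. simpl. rcont_auto.
Qed.

Lemma cont_Theta_w k : cont Z interval_space (fun z => Theta_w k (tt z) (ww z)).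
Proof.
  apply cont_interval_of_rcont; [exact PZ|].
  unfold Theta_w, to_I01, theta_v, clamp, orient. simpl. destruct k; rcont_auto.
Qed.

End SquareContinuity.

Section RelativeCylinder.
Variables B A : space.
Variable i : pt B -> pt A.
Hypotheses (PB : is_pstop B) (PA : is_pstop A) (Ci : cof B A i).
Variables (k : bool) (Y : space) (f : pt (cyl A) -> pt Y) (G : pt (cyl (dpo i)) -> pt Y).
Hypotheses (PY : is_pstop Y) (cf : cont (cyl A) Y f) (cG : cont (cyl (dpo i)) Y G).
Hypothesis E : forall p, f (dpo_j i p) = G (ik k p).

Let PI := interval_pstop.
Let PIA := cyl_pstop A PA.
Let PIB := cyl_pstop B PB.
Let PP := dpo_pstop B A i PB PA.

Lemma compat_a0 a : f (a, zero01) = G (dpo_a0 i a, endpt k).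
Proof. pose proof (E (dpo_a0 i a)) as H. now rewrite dpo_j_a0 in H. Qed.

Lemma compat_a1 a : f (a, one01) = G (dpo_a1 i a, endpt k).
Proof. pose proof (E (dpo_a1 i a)) as H. now rewrite dpo_j_a1 in H. Qed.

Lemma compat_c q : f (cyl_map i q) = G (dpo_c i q, endpt k).
Proof. pose proof (E (dpo_c i q)) as H. now rewrite dpo_j_c in H. Qed.

(* bottom is the data on the three faces t = 0, w = k, t = 1 of I(IA), transported by
   theta to the left, middle and right thirds of the bottom face; side is the data on
   I(IB), transported likewise. *)
Definition bottom_left (p : pt (cyl A)) : pt Y :=
  G (dpo_a0 i (fst p), Theta_w k (snd p) zero01).
Definition bottom_middle (p : pt (cyl A)) : pt Y := f (fst p, Theta_t (snd p) zero01).
Definition bottom_right (p : pt (cyl A)) : pt Y :=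
  G (dpo_a1 i (fst p), Theta_w k (snd p) zero01).
Definition bottom_upper (p : pt (cyl A)) : pt Y :=
  if Rle_dec (proj1_sig (snd p)) (2/3) then bottom_middle p else bottom_right p.
Definition bottom (p : pt (cyl A)) : pt Y :=
  if Rle_dec (proj1_sig (snd p)) (1/3) then bottom_left p else bottom_upper p.

Definition side (p : pt (cyl (cyl B))) : pt Y :=
  G (dpo_c i (fst (fst p), Theta_t (snd (fst p)) (snd p)), Theta_w k (snd (fst p)) (snd p)).

Lemma bottom_left_middle a (t : I01) :
  proj1_sig t = 1/3 -> bottom_left (a, t) = bottom_middle (a, t).
Proof.
  intros Ht. unfold bottom_left, bottom_middle. simpl.
  rewrite Theta_t_left, Theta_w_middle by lra. symmetry. apply compat_a0.
Qed.

Lemma bottom_middle_right a (t : I01) :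
  proj1_sig t = 2/3 -> bottom_middle (a, t) = bottom_right (a, t).
Proof.
  intros Ht. unfold bottom_right, bottom_middle. simpl.
  rewrite Theta_t_right, Theta_w_middle by lra. apply compat_a1.
Qed.

Lemma bottom_is_left a (t : I01) : proj1_sig t <= 1/3 -> bottom (a, t) = bottom_left (a, t).
Proof. intros Ht. unfold bottom. simpl. now destruct Rle_dec. Qed.

Lemma bottom_upper_is_middle a (t : I01) :
  proj1_sig t <= 2/3 -> bottom_upper (a, t) = bottom_middle (a, t).
Proof. intros Ht. unfold bottom_upper. simpl. now destruct Rle_dec. Qed.

Lemma bottom_upper_is_right a (t : I01) :
  2/3 <= proj1_sig t -> bottom_upper (a, t) = bottom_right (a, t).
Proof.
  intros Ht. unfold bottom_upper. simpl. destruct Rle_dec; [|reflexivity].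
  apply bottom_middle_right. lra.
Qed.

Lemma bottom_is_upper a (t : I01) : 1/3 <= proj1_sig t -> bottom (a, t) = bottom_upper (a, t).
Proof.
  intros Ht. unfold bottom. simpl. destruct Rle_dec; [|reflexivity].
  rewrite bottom_upper_is_middle by lra. apply bottom_left_middle. lra.
Qed.

Lemma bottom_is_middle a (t : I01) :
  1/3 <= proj1_sig t <= 2/3 -> bottom (a, t) = bottom_middle (a, t).
Proof. intros Ht. rewrite bottom_is_upper by lra. apply bottom_upper_is_middle. lra. Qed.

Lemma bottom_is_right a (t : I01) : 2/3 <= proj1_sig t -> bottom (a, t) = bottom_right (a, t).
Proof. intros Ht. rewrite bottom_is_upper by lra. now apply bottom_upper_is_right. Qed.

Lemma cont_bottom : cont (cyl A) Y bottom.
Proof.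
  pose proof (rcont_of_cont_interval _ _ PIA (cont_cyl_snd A)) as rt.
  assert (c0 : cont (cyl A) interval_space (fun _ => zero01)) by now apply cont_const.
  assert (cside : forall a0 : pt A -> pt (dpo i), cont A (dpo i) a0 ->
    cont (cyl A) Y (fun p => G (a0 (fst p), Theta_w k (snd p) zero01))).
  { intros a0 ca0. apply (cont_comp _ (cyl (dpo i)) _
      (fun p : pt (cyl A) => (a0 (fst p), Theta_w k (snd p) zero01))); auto.
    apply cont_pair; auto using cont_Theta_w, cont_cyl_snd.
    apply (cont_comp _ A); auto using cont_cyl_fst. }
  apply (cont_paste _ PIA Y bottom bottom_left bottom_upper _ (1/3) PY rt).
  - apply cside. now apply cont_dpo_a0.
  - apply (cont_paste _ PIA Y bottom_upper bottom_middle bottom_right _ (2/3) PY rt).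
    + apply (cont_comp _ (cyl A) _ (fun p : pt (cyl A) => (fst p, Theta_t (snd p) zero01)));
        auto.
      apply cont_pair; auto using cont_cyl_fst, cont_Theta_t, cont_cyl_snd.
    + apply cside. now apply cont_dpo_a1.
    + intros [a t] Ht. now apply bottom_upper_is_middle.
    + intros [a t] Ht. now apply bottom_upper_is_right.
  - intros [a t] Ht. now apply bottom_is_left.
  - intros [a t] Ht. now apply bottom_is_upper.
Qed.

Lemma cont_side : cont (cyl (cyl B)) Y side.
Proof.
  pose proof (cyl_pstop _ PIB) as PIIB.
  apply (cont_comp _ (cyl (dpo i)) _ (fun p : pt (cyl (cyl B)) =>
    (dpo_c i (fst (fst p), Theta_t (snd (fst p)) (snd p)), Theta_w k (snd (fst p)) (snd p))));
    auto.
  apply cont_pair; auto using cont_Theta_w, cont_snd_fst, cont_cyl_snd.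
  apply (cont_comp _ (cyl B)); auto using cont_dpo_c.
  apply cont_pair; auto using cont_fst_fst, cont_Theta_t, cont_snd_fst, cont_cyl_snd.
Qed.

Lemma bottom_side b t : bottom (i b, t) = side ((b, t), zero01).
Proof.
  unfold side. simpl. destruct (Rle_dec (proj1_sig t) (1/3)) as [Hl|Hl].
  - rewrite bottom_is_left, Theta_t_left by exact Hl. unfold bottom_left. simpl.
    now rewrite dpo_comm0.
  - destruct (Rle_dec (proj1_sig t) (2/3)) as [Hm|Hm].
    + rewrite bottom_is_middle, Theta_w_middle by lra. unfold bottom_middle. simpl.
      apply (compat_c (b, Theta_t t zero01)).
    + rewrite bottom_is_right, Theta_t_right by lra. unfold bottom_right. simpl.
      now rewrite dpo_comm1.
Qed.

Lemma relcyl_extension :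
  exists H : pt (cyl (cyl A)) -> pt Y, cont (cyl (cyl A)) Y H /\
    (forall p, H (ik k p) = f p) /\ (forall q, H (cyl_map (dpo_j i) q) = G q).
Proof.
  pose proof (cyl_pstop _ PIA) as PIIA.
  destruct (cyl_map_HEP B A i PB PA Ci false Y PY bottom side cont_bottom cont_side
    (fun q => bottom_side (fst q) (snd q))) as [K [cK [Kbot Kside]]].
  exists (fun p => K ((fst (fst p), Psi_t k (snd (fst p)) (snd p)), Psi_w k (snd (fst p)) (snd p))).
  split; [|split].
  - apply (cont_comp _ (cyl (cyl A)) _ (fun p : pt (cyl (cyl A)) =>
      ((fst (fst p), Psi_t k (snd (fst p)) (snd p)), Psi_w k (snd (fst p)) (snd p))) K); auto.
    apply cont_pair; auto using cont_Psi_w, cont_snd_fst, cont_cyl_snd.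
    apply cont_pair; auto using cont_fst_fst, cont_Psi_t, cont_snd_fst, cont_cyl_snd.
  - intros [a t]. simpl. change (if k then one01 else zero01) with (endpt k).
    assert (Hface : Psi_w k t (endpt k) = zero01) by (apply Psi_w_faces; auto).
    rewrite Hface. change (K (@ik false (cyl A) (a, Psi_t k t (endpt k))) = f (a, t)).
    rewrite Kbot, bottom_is_middle by apply Psi_t_endpt. unfold bottom_middle. simpl.
    now rewrite Theta_Psi_t_bottom.
  - intros [p w]. simpl. destruct (dpo_cases B A i p) as [[a ->]|[[[b s] ->]|[a ->]]].
    + rewrite dpo_j_a0. simpl.
      assert (Hface : Psi_w k zero01 w = zero01) by (apply Psi_w_faces; auto).
      rewrite Hface. change (K (@ik false (cyl A) (a, Psi_t k zero01 w)) = G (dpo_a0 i a, w)).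
      rewrite Kbot, bottom_is_left by apply Psi_t_zero. unfold bottom_left. simpl.
      now rewrite Theta_Psi_w_bottom.
    + rewrite dpo_j_c. simpl.
      change (K (cyl_map (cyl_map i) ((b, Psi_t k s w), Psi_w k s w)) = G (dpo_c i (b, s), w)).
      rewrite Kside. unfold side. simpl.
      now rewrite Theta_Psi_t, Theta_Psi_w.
    + rewrite dpo_j_a1. simpl.
      assert (Hface : Psi_w k one01 w = zero01) by (apply Psi_w_faces; auto).
      rewrite Hface. change (K (@ik false (cyl A) (a, Psi_t k one01 w)) = G (dpo_a1 i a, w)).
      rewrite Kbot, bottom_is_right by apply Psi_t_one. unfold bottom_right. simpl.
      now rewrite Theta_Psi_w_bottom.
Qed.

End RelativeCylinder.

Lemma relcyl_cof (B A : space) (i : pt B -> pt A) :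
  is_pstop B -> is_pstop A -> cof B A i -> cof (dpo i) (cyl A) (dpo_j i).
Proof.
  intros PB PA Ci. split; [apply cont_dpo_j; auto; apply Ci|].
  intros k Y PY f G cf cG E. now apply relcyl_extension.
Qed.

Theorem mainTheorem2 :
  (* (I, i0, i1, p) is a cylinder on PsTop *)
  (forall X : space, is_pstop X ->
     is_pstop (cyl X) /\ cont X (cyl X) (ik false) /\ cont X (cyl X) (ik true) /\
     cont (cyl X) X cylp /\
     (forall (k : bool) (x : pt X), cylp (ik k x) = x)) /\
  (forall (X Y : space) (f : pt X -> pt Y), is_pstop X -> is_pstop Y ->
     cont X Y f ->
     cont (cyl X) (cyl Y) (cyl_map f) /\
     (forall (k : bool) (x : pt X), cyl_map f (ik k x) = ik k (f x)) /\
     (forall q : pt (cyl X), f (cylp q) = cylp (cyl_map f q))) /\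
  (* ∅ is an initial object *)
  is_pstop empty_space /\ is_initial empty_space /\
  (* (1) cylinder axiom: I∅ = ∅ *)
  is_initial (cyl empty_space) /\
  (* (2) pushout axiom *)
  (forall (B A X : space) (i : pt B -> pt A) (f : pt B -> pt X),
     is_pstop B -> is_pstop A -> is_pstop X -> cof B A i -> cont B X f ->
     exists (P : space) (u : pt A -> pt P) (v : pt X -> pt P),
       is_pushout B A X P i f u v /\ cof X P v /\
       is_pushout (cyl B) (cyl A) (cyl X) (cyl P)
         (cyl_map i) (cyl_map f) (cyl_map u) (cyl_map v)) /\
  (* (3) cofibration axiom *)
  (forall (X Y : space) (f : pt X -> pt Y), is_pstop X -> is_pstop Y ->
     is_iso X Y f -> cof X Y f) /\
  (forall X : space, is_pstop X -> cof empty_space X (empty_map X)) /\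
  (forall (X Y Z : space) (f : pt X -> pt Y) (g : pt Y -> pt Z),
     is_pstop X -> is_pstop Y -> is_pstop Z ->
     cof X Y f -> cof Y Z g -> cof X Z (fun x => g (f x))) /\
  (forall (X Y : space) (f : pt X -> pt Y), is_pstop X -> is_pstop Y ->
     cof X Y f -> HEP X Y f) /\
  (* (4) interchange axiom *)
  (forall X : space, is_pstop X ->
     exists T : pt (cyl (cyl X)) -> pt (cyl (cyl X)),
       cont (cyl (cyl X)) (cyl (cyl X)) T /\
       forall k : bool,
         (forall q : pt (cyl X), T (ik k q) = cyl_map (ik k) q) /\
         (forall q : pt (cyl X), T (cyl_map (ik k) q) = ik k q)) /\
  (* (5) relative cylinder axiom *)
  (forall (B A : space) (i : pt B -> pt A),
     is_pstop B -> is_pstop A -> cof B A i ->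
     exists (P : space) (a0 : pt A -> pt P) (c : pt (cyl B) -> pt P)
            (a1 : pt A -> pt P),
       is_dpushout B A P i a0 c a1 /\
       exists j : pt P -> pt (cyl A),
         cont P (cyl A) j /\
         (forall a, j (a0 a) = ik false a) /\
         (forall q, j (c q) = cyl_map i q) /\
         (forall a, j (a1 a) = ik true a) /\
         cof P (cyl A) j).
Proof.
  split; [|split; [|split; [|split; [|split; [|split; [|split; [|split; [|split; [|split]]]]]]]]].
  - intros X PX. split; [now apply cyl_pstop|]. split; [now apply cont_ik|].
    split; [now apply cont_ik|]. split; [apply cont_cyl_fst|]. reflexivity.
  - intros X Y f PX PY cf. split; [now apply cont_cyl_map|]. split; reflexivity.
  - exact empty_pstop.
  - exact empty_initial.
  - exact cyl_empty_initial.
  - intros B A X i f PB PA PX Ci cf. exists (po i f), (po_u i f), (po_v i f).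
    split; [now apply po_pushout|]. split; [now apply po_v_cof|]. now apply cyl_po_pushout.
  - exact iso_cof.
  - exact empty_cof.
  - exact comp_cof.
  - now intros X Y f _ _ [_ Hf].
  - split; [exact interchange|].
    intros B A i PB PA Ci. exists (dpo i), (dpo_a0 i), (dpo_c i), (dpo_a1 i).
    split; [now apply dpo_dpushout|]. exists (dpo_j i).
    split; [apply cont_dpo_j; auto; apply Ci|].
    split; [exact (dpo_j_a0 B A i)|]. split; [exact (dpo_j_c B A i)|].
    split; [exact (dpo_j_a1 B A i)|]. now apply relcyl_cof.
Qed.
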